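(* Let $v_1,\dots,v_m\in\mathbb{C}^d$ with $m$ even, $\sum_{i=1}^m v_iv_i^*=\mathbb{I}$, $\|v_i\|^2=\alpha$ for all $i$, and $\alpha\le\frac{1}{221d}$. Run Algorithm 1 (described in the context) and fix an iteration $0\le j<m/2$. Suppose that for every $0\le j'\le j$ we have $u_{j'}-\lambda_{\max}(A_{j'})\ge 1/3$ and $\kappa(u_{j'}\mathbb{I}-A_{j'})\le 3/2$. Write $A=A_j$, $\mathcal{B}=\mathcal{B}_j$, $u=u_j$, $\widehat u=u_{j+1}$. Then \[ \sum_{v\in\mathcal{B}}\Big(\Phi^u(A)-\Phi^{\widehat u}(A+vv^* )\Big)\ge(m-j)\cdot\mathrm{tr}\Big[\log\big((u\mathbb{I}-A)^{-1}(\widehat u\mathbb{I}-A)\big)\Big]+\frac1\alpha\cdot\frac{m-j}{m}\cdot\mathrm{tr}\Big[\log\big(\mathbb{I}-\alpha(\widehat u\mathbb{I}-A)^{-1}\big)\Big]. \]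
   Context: For a Hermitian matrix $A$ and $u\in\mathbb{R}$ with $u\mathbb{I}-A$ positive definite, $\Phi^u(A)=\mathrm{tr}\log\big((u\mathbb{I}-A)^{-1}\big)=-\log\det(u\mathbb{I}-A)$, with $\log$ the matrix logarithm. Algorithm 1: set $A_0=\mathbf{0}_{d\times d}$, $\mathcal{A}_0=\emptyset$, $\mathcal{B}_0=\{v_1,\dots,v_m\}$, $u_0=1/2$, $\delta_u=\alpha/d$. For $j=0,\dots,m/2-1$: set $u_{j+1}=u_j+\delta_u$; choose $v_j\in\mathcal{B}_j$ maximising $\det(u_{j+1}\mathbb{I}-A_j-vv^* )$ over $v\in\mathcal{B}_j$ (ties arbitrary); set $A_{j+1}=A_j+v_jv_j^*$, $\mathcal{A}_{j+1}=\mathcal{A}_j\cup\{v_j\}$, $\mathcal{B}_{j+1}=\mathcal{B}_j\setminus\{v_j\}$. $\kappa(B)=\lambda_{\max}(B)/\lambda_{\min}(B)$ for Hermitian positive definite $B$. *)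

From HB Require Import structures.
From mathcomp Require Import all_boot all_order all_algebra.
From mathcomp Require Import all_classical all_reals all_analysis.
From mathcomp Require Import complex.
Set Implicit Arguments. Unset Strict Implicit. Unset Printing Implicit Defensive.
Import Order.TTheory GRing.Theory Num.Theory.
Local Open Scope ring_scope.
Local Open Scope classical_set_scope.

Definition cR (R : realType) (x : R) : R[i] := (x%:C)%C.

Definition hconj (R : realType) m n (A : 'M[R[i]]_(m, n)) : 'M[R[i]]_(n, m) :=
  (map_mx (@conjc R) A)^T.

(* tr log M for a matrix M with positive real spectrum (all uses below):
   tr log M = sum of log of eigenvalues = log det M. *)
Definition trlog (R : realType) d (M : 'M[R[i]]_d) : R :=
  ln (complex.Re (\det M)).

Definition Phi (R : realType) d (u : R) (A : 'M[R[i]]_d) : R :=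
  trlog (invmx ((cR u)%:M - A)).

(* extreme eigenvalues of a Hermitian matrix (whose eigenvalues are real) *)
Definition lambda_max (R : realType) d (B : 'M[R[i]]_d) : R :=
  sup [set complex.Re a | a in [set a : R[i] | eigenvalue B a]].
Definition lambda_min (R : realType) d (B : 'M[R[i]]_d) : R :=
  inf [set complex.Re a | a in [set a : R[i] | eigenvalue B a]].
Definition kappa (R : realType) d (B : 'M[R[i]]_d) : R :=
  lambda_max B / lambda_min B.

(* Algorithm 1.  A run is encoded by the sequence sigma of chosen indices:
   v_j of the paper is v (sigma j). *)
Definition u_alg (R : realType) (d : nat) (alpha : R) (j : nat) : R :=
  1 / 2 + j%:R * (alpha / d%:R).

Definition chosen m (sigma : nat -> 'I_m) (j : nat) : {set 'I_m} :=
  [set i | has (fun k => sigma k == i) (iota 0 j)].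

Definition B_alg m (sigma : nat -> 'I_m) (j : nat) : {set 'I_m} :=
  ~: chosen sigma j.

Definition A_alg (R : realType) d m (v : 'I_m -> 'cV[R[i]]_d)
    (sigma : nat -> 'I_m) (j : nat) : 'M[R[i]]_d :=
  \sum_(0 <= k < j) (v (sigma k) *m hconj (v (sigma k))).

(* sigma is a valid run of Algorithm 1 (ties broken arbitrarily) *)
Definition is_run (R : realType) d m (alpha : R) (v : 'I_m -> 'cV[R[i]]_d)
    (sigma : nat -> 'I_m) : Prop :=
  forall j : nat, (j < m %/ 2)%N ->
    sigma j \in B_alg sigma j /\
    forall i, i \in B_alg sigma j ->
      complex.Re (\det ((cR (u_alg d alpha j.+1))%:M - A_alg v sigma j
                         - v i *m hconj (v i)))
      <= complex.Re (\det ((cR (u_alg d alpha j.+1))%:M - A_alg v sigma j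
                         - v (sigma j) *m hconj (v (sigma j)))).

(* Diagonalise A = P^* diag(r) P with P unitary and put y_ik = |(P v_i)_k|^2.
   By the matrix determinant lemma, adding v_i v_i^* to A changes Phi^uh by
   - log (1 - sum_k y_ik / (uh - r_k)), and Phi^u(A) - Phi^uh(A) is the first
   trace-log of the right-hand side, so it remains to bound
   sum_(i in B) log (1 - sum_k y_ik / (uh - r_k)).  As sum_k y_ik = alpha,
   concavity of log bounds each summand below by
   sum_k (y_ik / alpha) log (1 - alpha / (uh - r_k)); summing over i in B, where
   sum_(i in B) y_ik = 1 - r_k, leaves
   (1 / alpha) sum_k (1 - r_k) log (1 - alpha / (uh - r_k)).  The r_k have mean
   j / m (tr A = j alpha and m alpha = d) and the logarithm decreases in r_k, so
   Chebyshev's sum inequality replaces 1 - r_k by its mean (m - j) / m. *)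

From HB Require Import structures.
From mathcomp Require Import all_boot all_order all_algebra.
From mathcomp Require Import all_classical all_reals all_analysis.
From mathcomp Require Import complex.
From mathcomp Require Import ring lra.
Import Order.TTheory GRing.Theory Num.Theory.
Local Open Scope ring_scope.

Section LnInequalities.
Context {R : realType}.

Lemma ln_prod {I : finType} (F : I -> R) :
  (forall k, 0 < F k) -> ln (\prod_k F k) = \sum_k ln (F k).
Proof.
move=> F_gt0.
pose K (x y : R) := 0 < x /\ ln x = y.
suff [] : K (\prod_k F k) (\sum_k ln (F k)) by [].
apply: (big_rec2 K); first by split; [exact: ltr01 | exact: ln1].
move=> k x y _ [x_gt0 <-]; split; first exact: mulr_gt0.
by rewrite lnM // posrE.
Qed.

Lemma convex_comb_gt0 {I : finType} (p z : I -> R) :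
  (forall k, 0 <= p k) -> \sum_k p k = 1 -> (forall k, 0 < z k) ->
  0 < \sum_k p k * z k.
Proof.
move=> p_ge0 p_sum1 z_gt0.
have /existsP [k pk_gt0] : [exists k, 0 < p k].
  apply: contraT => /existsPn p_le0.
  move: p_sum1; rewrite big1 => [/eqP|k _]; first by rewrite eq_sym oner_eq0.
  by apply/eqP; rewrite eq_le p_ge0 andbT leNgt p_le0.
rewrite (bigD1 k) //=; apply: ltr_pwDl; first exact: mulr_gt0.
by apply: sumr_ge0 => l _; rewrite mulr_ge0 // ltW.
Qed.

Lemma concave_ln_sum {I : finType} (p z : I -> R) :
  (forall k, 0 <= p k) -> \sum_k p k = 1 -> (forall k, 0 < z k) ->
  \sum_k p k * ln (z k) <= ln (\sum_k p k * z k).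
Proof.
move=> p_ge0 p_sum1 z_gt0.
set S := \sum_k p k * z k.
have S_gt0 : 0 < S by exact: convex_comb_gt0.
have tangent k : ln (z k) <= ln S + (z k / S - 1).
  rewrite -lerBlDl -ln_div ?posrE //.
  have := @le_ln1Dx _ (z k / S - 1); rewrite [1 + _]addrC subrK; apply.
  by rewrite ltrBrDl subrr divr_gt0.
apply: (le_trans (y := \sum_k p k * (ln S + (z k / S - 1)))).
  by apply: ler_sum => k _; apply: ler_wpM2l.
under eq_bigr => k _ do rewrite mulrDr mulrBr mulr1 mulrA.
rewrite big_split /= -mulr_suml p_sum1 mul1r sumrB -mulr_suml -/S.
by rewrite divff ?gt_eqF // p_sum1 subrr addr0.
Qed.

Lemma chebyshev_sum_ge0 n (r : 'I_n -> R) (f : R -> R) (mu bnd : R) :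
  \sum_k r k = n%:R * mu -> (forall k, r k <= bnd) ->
  {in `]-oo, bnd] &, {homo f : x y /~ x <= y}} ->
  0 <= \sum_k (mu - r k) * f (r k).
Proof.
case: n r => [|n] r r_sum r_le f_nonincr; first by rewrite big_ord0.
have mu_le : mu <= bnd.
  have : \sum_k r k <= \sum_(k < n.+1) bnd by apply: ler_sum.
  by rewrite sumr_const card_ord r_sum -[bnd *+ _]mulr_natl ler_pM2l ?ltr0Sn.
have -> : \sum_k (mu - r k) * f (r k) =
    \sum_k (mu - r k) * (f (r k) - f mu) + f mu * \sum_k (mu - r k).
  by rewrite mulr_sumr -big_split /=; apply: eq_bigr => k _; ring.
rewrite sumrB sumr_const card_ord r_sum mulr_natl subrr mulr0 addr0.
apply: sumr_ge0 => k _.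
have [le_rmu | lt_mur] := leP (r k) mu.
  by apply: mulr_ge0; rewrite subr_ge0 //; apply: f_nonincr; rewrite ?in_itv //=.
apply: mulr_le0; rewrite subr_le0 ?(ltW lt_mur) //.
by apply: f_nonincr; rewrite ?in_itv //= ltW.
Qed.

Section WeightedResolvent.
Context {I : finType} {y e : I -> R} {al : R}.
Hypotheses (al_gt0 : 0 < al) (y_ge0 : forall k, 0 <= y k)
  (y_sum : \sum_k y k = al) (al_lt_e : forall k, al < e k).

Let w_sum1 : \sum_k y k / al = 1.
Proof. by rewrite -mulr_suml y_sum divff ?gt_eqF. Qed.

Let w_ge0 k : 0 <= y k / al.
Proof. by rewrite divr_ge0 // ltW. Qed.

Let one_sub_div_gt0 k : 0 < 1 - al / e k.
Proof. by rewrite subr_gt0 ltr_pdivrMr ?mul1r ?(lt_trans al_gt0 (al_lt_e k)). Qed.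

Lemma one_sub_sum_divE :
  1 - \sum_k y k / e k = \sum_k y k / al * (1 - al / e k).
Proof.
rewrite -[1 in LHS]w_sum1 -sumrB; apply: eq_bigr => k _.
by field; rewrite !gt_eqF // (lt_trans al_gt0 (al_lt_e k)).
Qed.

Lemma one_sub_sum_div_gt0 : 0 < 1 - \sum_k y k / e k.
Proof. by rewrite one_sub_sum_divE; apply: convex_comb_gt0. Qed.

Lemma ln_one_sub_sum_div_ge :
  \sum_k y k / al * ln (1 - al / e k) <= ln (1 - \sum_k y k / e k).
Proof. by rewrite one_sub_sum_divE; apply: concave_ln_sum. Qed.

End WeightedResolvent.

(* Jensen for each i, then Chebyshev's sum inequality with the mean [j / m] of the [r k]. *)
Lemma sum_ln_one_sub_sum_div_ge {d m j : nat} {B : {set 'I_m}} {r : 'I_d -> R}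
    {y : 'I_m -> 'I_d -> R} {al c bnd : R} :
  (j < m)%N -> 0 < al -> m%:R * al = d%:R -> \sum_k r k = j%:R * al ->
  (forall k, r k <= bnd) -> bnd + al < c ->
  (forall i k, 0 <= y i k) -> (forall i, \sum_k y i k = al) ->
  (forall k, \sum_(i in B) y i k = 1 - r k) ->
  1 / al * ((m - j)%:R / m%:R) * \sum_k ln (1 - al / (c - r k))
    <= \sum_(i in B) ln (1 - \sum_k y i k / (c - r k)).
Proof.
move=> lt_jm al_gt0 m_al r_sum r_le bnd_lt y_ge0 y_sum yB.
have al_lt x : x <= bnd -> al < c - x.
  by move=> x_le; rewrite ltrBrDl; apply: le_lt_trans bnd_lt; rewrite lerD2r.
pose g t := ln (1 - al / (c - t)).
have g_nonincr : {in `]-oo, bnd] &, {homo g : s t /~ s <= t}}.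
  move=> s t; rewrite !in_itv /= => /al_lt al_lt_s /al_lt al_lt_t le_st.
  have [cs_gt0 ct_gt0] := (lt_trans al_gt0 al_lt_s, lt_trans al_gt0 al_lt_t).
  rewrite /g ler_ln ?posrE ?subr_gt0 ?ltr_pdivrMr ?mul1r //.
  by rewrite lerD2l lerN2 ler_pM2l // lef_pV2 ?posrE // lerD2l lerN2.
have m_gt0 : 0 < m%:R :> R by rewrite ltr0n (leq_ltn_trans _ lt_jm).
pose mu := j%:R / m%:R : R.
have cheb : 0 <= \sum_k (mu - r k) * g (r k).
  apply: chebyshev_sum_ge0 g_nonincr => //.
  by rewrite r_sum -m_al /mu; field; rewrite gt_eqF.
apply: (le_trans (y := \sum_(i in B) \sum_k y i k / al * g (r k))); last first.
  apply: ler_sum => i _; apply: ln_one_sub_sum_div_ge => // k.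
  exact: al_lt.
rewrite exchange_big /= mulr_sumr -subr_ge0 -sumrB.
rewrite (eq_bigr (fun k => (mu - r k) * g (r k) / al)); last first.
  move=> k _; rewrite -mulr_suml -mulr_suml yB natrB ?(ltnW lt_jm) //.
  by rewrite /mu /g; field; rewrite !gt_eqF.
by rewrite -mulr_suml divr_ge0 // ltW.
Qed.

End LnInequalities.

Local Open Scope sesquilinear_scope.

Lemma det_1_sub_mulmx (C : comUnitRingType) n (a : 'cV[C]_n) (b : 'rV[C]_n) :
  \det (1%:M - a *m b) = 1 - (b *m a) 0 0.
Proof.
have eq1 : block_mx (1%:M : 'M[C]_1) b a 1%:M =
    block_mx 1%:M 0 a 1%:M *m block_mx 1%:M b 0 (1%:M - a *m b).
  rewrite mulmx_block !(mul1mx, mulmx1, mul0mx, mulmx0, addr0, add0r).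
  by rewrite addrC subrK.
have eq2 : block_mx (1%:M : 'M[C]_1) b a 1%:M =
    block_mx (1%:M - b *m a) b 0 1%:M *m block_mx 1%:M 0 a 1%:M.
  rewrite mulmx_block !(mul1mx, mulmx1, mul0mx, mulmx0, addr0, add0r).
  by rewrite subrK.
have := congr1 determinant eq1; rewrite eq2 !det_mulmx.
rewrite (det_lblock (1%:M : 'M[C]_1) a) !det_ublock !det1 !mul1r !mulr1 => <-.
by rewrite det_mx11 !mxE.
Qed.

Lemma det_diag_sub_mulmx (F : fieldType) n (e : 'rV[F]_n) (a : 'cV[F]_n)
    (b : 'rV[F]_n) :
  (forall k, e 0 k != 0) ->
  \det (diag_mx e - a *m b) =
  (\prod_k e 0 k) * (1 - \sum_k b 0 k * a k 0 / e 0 k).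
Proof.
move=> e_neq0; pose e' := \row_k (e 0 k)^-1.
have ee' : diag_mx e *m diag_mx e' = 1%:M.
  apply/matrixP => i j; rewrite mul_diag_mx !mxE.
  by case: eqP => [->|_]; rewrite ?mulr1n ?mulr0n ?mulr0 ?divff.
have -> : diag_mx e - a *m b = diag_mx e *m (1%:M - (diag_mx e' *m a) *m b).
  by rewrite mulmxBr mulmx1 !mulmxA ee' mul1mx.
rewrite det_mulmx det_1_sub_mulmx det_diag mxE; congr (_ * (1 - _)).
by apply: eq_bigr => k _; rewrite mul_diag_mx !mxE mulrCA mulrC.
Qed.

Lemma det_unitary_conj {C : numClosedFieldType} {n : nat} (P X : 'M[C]_n) :
  P \is unitarymx -> \det (P *m X *m P^t*) = \det X.
Proof.
by move=> /unitarymxP PPt; rewrite !det_mulmx mulrAC -det_mulmx PPt det1 mul1r.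
Qed.

Lemma hconjE (R : realType) p q (X : 'M[R[i]]_(p, q)) : hconj X = X^t*.
Proof. by rewrite /hconj map_trmx. Qed.

Lemma ge0_cR_Re (R : realType) (z : R[i]) : 0 <= z -> z = cR (complex.Re z).
Proof. by move=> z_ge0; rewrite [LHS]complexE (ger0_Im z_ge0) mulr0 addr0. Qed.

Lemma Re_ge0 (R : realType) (z : R[i]) : 0 <= z -> 0 <= complex.Re z.
Proof. by rewrite lecE => /andP[]. Qed.

Lemma cR_sum (R : realType) (I : Type) (r : seq I) (Q : pred I) (F : I -> R) :
  cR (\sum_(i <- r | Q i) F i) = \sum_(i <- r | Q i) cR (F i).
Proof. exact: rmorph_sum. Qed.

Lemma trlog_cR {R : realType} {d : nat} (M : 'M[R[i]]_d) (p : R) :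
  \det M = cR p -> trlog M = ln p.
Proof. by rewrite /trlog => ->. Qed.

Lemma trlog_invmx {R : realType} {d : nat} {M : 'M[R[i]]_d} {p : R} :
  \det M = cR p -> trlog (invmx M) = ln p^-1.
Proof. by rewrite /trlog det_inv => ->; rewrite /cR -fmorphV. Qed.

Section HermitianSpectrum.
Context {R : realType} {d : nat}.
Variable A : 'M[R[i]]_d.
Hypothesis A_herm : A^t* = A.

Local Notation P := (spectralmx A).
Local Notation D := (spectral_diag A).

Definition eig k : R := complex.Re (D 0 k).

Definition spectral_weight (v : 'cV[R[i]]_d) k : R :=
  complex.Re ((P *m v *m (P *m v)^t*) k k).

Let P_unitary : P \is unitarymx := spectral_unitarymx A.

Let PtP : P^t* *m P = 1%:M.
Proof. by rewrite -invmx_unitary // mulVmx ?spectral_unit. Qed.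

Lemma spectral_diag_cR k : D 0 k = cR (eig k).
Proof.
have A_hermsym : A \is hermsymmx.
  by apply/is_hermitianmxP; rewrite expr0 scale1r A_herm.
have /mxOverP/(_ 0 k) := hermitian_spectral_diag_real A_hermsym.
by rewrite /eig; case/complex_realP => x ->.
Qed.

Lemma spectral_conj : P *m A *m P^t* = diag_mx D.
Proof.
have A_normal : A \is normalmx by apply/normalmxP; rewrite A_herm.
have /orthomx_spectralP AE := A_normal.
rewrite [X in P *m X]AE invmx_unitary // !mulmxA (unitarymxP P_unitary) mul1mx.
by rewrite mulmxtVK.
Qed.

Lemma spectral_intertwine : P *m A = diag_mx D *m P.
Proof. by rewrite -spectral_conj mulmxKtV. Qed.

Lemma conj_scalar_sub (c : R[i]) (X : 'M[R[i]]_d) :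
  P *m (c%:M - X) *m P^t* = c%:M - P *m X *m P^t*.
Proof.
rewrite mulmxBr mulmxBl mul_mx_scalar -scalemxAl (unitarymxP P_unitary).
by rewrite scalemx1.
Qed.

Lemma scalar_sub_spectral_diag c :
  (cR c)%:M - diag_mx D = diag_mx (\row_k cR (c - eig k)).
Proof.
apply/matrixP => i j; rewrite !mxE spectral_diag_cR /cR rmorphB.
by case: eqP => [->|_]; rewrite ?mulr1n ?mulr0n ?subr0.
Qed.

Lemma det_sub_herm c : \det ((cR c)%:M - A) = cR (\prod_k (c - eig k)).
Proof.
rewrite -(det_unitary_conj _ ((cR c)%:M - A) P_unitary) conj_scalar_sub.
rewrite spectral_conj scalar_sub_spectral_diag det_diag /cR rmorph_prod.
by apply: eq_bigr => k _; rewrite mxE.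
Qed.

Lemma conj_outer (v : 'cV[R[i]]_d) :
  P *m v *m (P *m v)^t* = P *m (v *m hconj v) *m P^t*.
Proof. by rewrite hconjE trmx_mul map_mxM !mulmxA. Qed.

Let outer_diag_ge0 (v : 'cV[R[i]]_d) k : 0 <= (P *m v *m (P *m v)^t*) k k.
Proof. by move: (P *m v) => w; rewrite mxE big_ord1 !mxE; apply: mulcJ_ge0. Qed.

Lemma spectral_weight_ge0 v k : 0 <= spectral_weight v k.
Proof. exact/Re_ge0/outer_diag_ge0. Qed.

Lemma spectral_weight_cR v k :
  (P *m v *m (P *m v)^t*) k k = cR (spectral_weight v k).
Proof. exact/ge0_cR_Re/outer_diag_ge0. Qed.

Lemma sum_spectral_weight v :
  cR (\sum_k spectral_weight v k) = (hconj v *m v) 0 0.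
Proof.
rewrite cR_sum; under eq_bigr => k _ do rewrite -spectral_weight_cR.
rewrite -/(\tr _) mxtrace_mulC hconjE trmx_mul map_mxM mulmxA.
by rewrite -(mulmxA _ _ P) PtP mulmx1 /mxtrace big_ord1.
Qed.

Lemma sum_spectral_weight_compl {I : finType} (v : I -> 'cV[R[i]]_d)
    (B : {set I}) k :
  \sum_(i in B) v i *m hconj (v i) = 1%:M - A ->
  \sum_(i in B) spectral_weight (v i) k = 1 - eig k.
Proof.
move=> vB; apply: complexI; rewrite -/(cR _) cR_sum.
under eq_bigr => i _ do rewrite -spectral_weight_cR conj_outer.
rewrite -summxE -mulmx_suml -mulmx_sumr vB.
have := conj_scalar_sub 1 A; rewrite spectral_conj => ->.
by rewrite !mxE eqxx spectral_diag_cR rmorphB.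
Qed.

Lemma det_sub_herm_rank1 c v : (forall k, eig k != c) ->
  \det ((cR c)%:M - (A + v *m hconj v)) =
  cR (\prod_k (c - eig k) * (1 - \sum_k spectral_weight v k / (c - eig k))).
Proof.
move=> eig_neq.
rewrite -(det_unitary_conj _ ((cR c)%:M - (A + v *m hconj v)) P_unitary).
rewrite conj_scalar_sub mulmxDr mulmxDl spectral_conj -conj_outer opprD addrA.
rewrite scalar_sub_spectral_diag det_diag_sub_mulmx => [|k]; last first.
  by rewrite mxE /cR fmorph_eq0 subr_eq0 eq_sym.
have entry k : ((P *m v)^t*) 0 k * (P *m v) k 0 = cR (spectral_weight v k).
  by rewrite -spectral_weight_cR [RHS]mxE big_ord1 mulrC.
under eq_bigr => k _ do rewrite mxE.
under [X in 1 - X]eq_bigr => k _ do rewrite entry mxE.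
rewrite /cR rmorphM rmorphB rmorph1 rmorph_prod rmorph_sum.
by congr (_ * (1 - _)); apply: eq_bigr => k _; rewrite fmorph_div.
Qed.

Lemma eigenvalue_eig k : eigenvalue A (cR (eig k)).
Proof.
apply/eigenvalueP; exists (delta_mx 0 k *m P).
  rewrite -mulmxA spectral_intertwine mulmxA -spectral_diag_cR scalemxAl.
  congr (_ *m P); apply/rowP => j; rewrite mul_mx_diag !mxE eqxx /=.
  by case: eqP => [->|_]; rewrite ?mulr1 ?mul1r ?mulr0 ?mul0r.
apply: contraTneq isT => /(congr1 (fun X => X *m P^t*)).
by rewrite mul0mx mulmxtVK // => /rowP /(_ k) /eqP; rewrite !mxE !eqxx oner_eq0.
Qed.

Lemma eigenvalue_herm a : eigenvalue A a -> exists k, a = cR (eig k).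
Proof.
case/eigenvalueP => x xA x_neq0; pose y := x *m P^t*.
have yD : y *m diag_mx D = a *: y.
  by rewrite /y -spectral_conj !mulmxA mulmxKtV // scalemxAl -xA.
have [l yl_neq0] : exists l, y 0 l != 0.
  apply/existsP; apply: contraR x_neq0 => /existsPn y0.
  have -> : x = y *m P by rewrite /y mulmxKtV.
  suff -> : y = 0 by rewrite mul0mx.
  by apply/rowP => j; rewrite [RHS]mxE; apply/eqP/negPn/y0.
exists l; rewrite -spectral_diag_cR; apply: (mulIf yl_neq0).
by have /rowP /(_ l) := yD; rewrite mul_mx_diag !mxE mulrC => ->.
Qed.

Lemma eig_le_lambda_max k : eig k <= lambda_max A.
Proof.
apply: sup_upper_bound; last by exists (cR (eig k)) => //; apply: eigenvalue_eig.
split; first by exists (eig k), (cR (eig k)) => //; apply: eigenvalue_eig.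
exists (\sum_l `|eig l|) => _ [a /eigenvalue_herm [l ->] <-].
by apply: le_trans (ler_norm _) _; rewrite (bigD1 l) //= lerDl sumr_ge0.
Qed.

Lemma tr_herm : \tr A = cR (\sum_k eig k).
Proof.
have -> : \tr A = \tr (P *m A *m P^t*) by rewrite mxtrace_mulC mulmxA PtP mul1mx.
rewrite spectral_conj mxtrace_diag cR_sum.
by under eq_bigr => k _ do rewrite spectral_diag_cR.
Qed.

Lemma trlog_resolvent_ratio c c' :
  (forall k, eig k < c) -> (forall k, eig k < c') ->
  trlog (invmx ((cR c)%:M - A) *m ((cR c')%:M - A)) = Phi c A - Phi c' A.
Proof.
move=> lt_c lt_c'.
have [p_gt0 p'_gt0] : 0 < \prod_k (c - eig k) /\ 0 < \prod_k (c' - eig k).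
  by split; apply: prodr_gt0 => k _; rewrite subr_gt0.
rewrite /Phi !(trlog_invmx (det_sub_herm _)).
rewrite (trlog_cR _ ((\prod_k (c - eig k))^-1 * \prod_k (c' - eig k))).
  by rewrite lnM ?posrE ?invr_gt0 // !lnV ?posrE // opprK.
by rewrite det_mulmx det_inv !det_sub_herm /cR -fmorphV -rmorphM.
Qed.

Lemma Phi_herm_rank1 c v : (forall k, eig k < c) ->
  0 < 1 - \sum_k spectral_weight v k / (c - eig k) ->
  Phi c (A + v *m hconj v) =
  Phi c A - ln (1 - \sum_k spectral_weight v k / (c - eig k)).
Proof.
move=> lt_c x_lt1.
have p_gt0 : 0 < \prod_k (c - eig k) by apply: prodr_gt0 => k _; rewrite subr_gt0.
have eig_neq k : eig k != c by rewrite lt_eqF.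
rewrite /Phi (trlog_invmx (det_sub_herm _)).
rewrite (trlog_invmx (det_sub_herm_rank1 c v eig_neq)).
by rewrite !lnV ?posrE ?mulr_gt0 // lnM ?posrE // opprD.
Qed.

Lemma trlog_one_sub_resolvent c al : 0 < al -> (forall k, al < c - eig k) ->
  trlog (1%:M - cR al *: invmx ((cR c)%:M - A)) =
  \sum_k ln (1 - al / (c - eig k)).
Proof.
move=> al_gt0 al_lt.
have c_gt k : 0 < c - eig k := lt_trans al_gt0 (al_lt k).
have M_unit : (cR c)%:M - A \in unitmx.
  by rewrite unitmxE det_sub_herm unitfE /cR fmorph_eq0 gt_eqF // prodr_gt0.
have -> : 1%:M - cR al *: invmx ((cR c)%:M - A) =
    ((cR (c - al))%:M - A) *m invmx ((cR c)%:M - A).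
  by rewrite /cR rmorphB raddfB /= addrAC mulmxBl mulmxV // mul_scalar_mx.
rewrite (trlog_cR _ (\prod_k (1 - al / (c - eig k)))); last first.
  rewrite det_mulmx det_inv !det_sub_herm /cR -fmorphV -rmorphM; congr (_ %:C)%C.
  rewrite -prodfV -big_split /=; apply: eq_bigr => k _.
  by field; rewrite (gt_eqF (c_gt k)).
by rewrite ln_prod // => k; rewrite subr_gt0 ltr_pdivrMr // mul1r.
Qed.

Lemma sum_Phi_decrease_ge {m j : nat} {v : 'I_m -> 'cV[R[i]]_d} {B : {set 'I_m}}
    {al u uh : R} :
  (j < m)%N -> 0 < al -> m%:R * al = d%:R -> #|B| = (m - j)%N ->
  \tr A = cR (j%:R * al) ->
  (forall i, (hconj (v i) *m v i) 0 0 = cR al) ->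
  \sum_(i in B) v i *m hconj (v i) = 1%:M - A ->
  lambda_max A + al < u -> u <= uh ->
  (m - j)%:R * trlog (invmx ((cR u)%:M - A) *m ((cR uh)%:M - A))
    + 1 / al * ((m - j)%:R / m%:R)
      * trlog (1%:M - cR al *: invmx ((cR uh)%:M - A))
  <= \sum_(i in B) (Phi u A - Phi uh (A + v i *m hconj (v i))).
Proof.
move=> lt_jm al_gt0 m_al card_B trA v_norm vB lam_lt le_u.
pose y i k := spectral_weight (v i) k.
have y_sum i : \sum_k y i k = al.
  by apply: complexI; rewrite -/(cR _) sum_spectral_weight v_norm.
have al_lt_u k : al < u - eig k.
  rewrite ltrBrDr addrC; apply: le_lt_trans lam_lt.
  by rewrite lerD2r eig_le_lambda_max.
have al_lt_uh k : al < uh - eig k.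
  by apply: lt_le_trans (al_lt_u k) _; rewrite lerD2r.
have lt_u k : eig k < u by rewrite -subr_gt0 (lt_trans al_gt0).
have lt_uh k : eig k < uh by rewrite -subr_gt0 (lt_trans al_gt0).
have decrease i : Phi u A - Phi uh (A + v i *m hconj (v i)) =
    (Phi u A - Phi uh A) + ln (1 - \sum_k y i k / (uh - eig k)).
  rewrite Phi_herm_rank1 ?opprD ?opprK ?addrA //.
  by apply: one_sub_sum_div_gt0 (y_sum i) _ => // k; apply: spectral_weight_ge0.
rewrite (eq_bigr _ (fun i _ => decrease i)) big_split /= sumr_const card_B.
rewrite [(m - j)%:R * _]mulr_natl trlog_resolvent_ratio // lerD2l.
rewrite trlog_one_sub_resolvent //.
apply: (sum_ln_one_sub_sum_div_ge lt_jm al_gt0 m_al _ eig_le_lambda_max).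
- by apply: complexI; rewrite -/(cR _) -tr_herm.
- exact: lt_le_trans lam_lt le_u.
- by move=> i k; apply: spectral_weight_ge0.
- exact: y_sum.
- by move=> k; apply: sum_spectral_weight_compl.
Qed.

End HermitianSpectrum.

Lemma outer_herm (R : realType) d (w : 'cV[R[i]]_d) :
  (w *m hconj w)^t* = w *m hconj w.
Proof. by rewrite !hconjE trmx_mul map_mxM trmxCK. Qed.

Lemma tr_sum_outer (R : realType) d (I : Type) (r : seq I) (Q : pred I)
    (v : I -> 'cV[R[i]]_d) :
  \tr (\sum_(i <- r | Q i) v i *m hconj (v i)) =
  \sum_(i <- r | Q i) (hconj (v i) *m v i) 0 0.
Proof.
rewrite raddf_sum; apply: eq_bigr => i _.
by rewrite /= mxtrace_mulC /mxtrace big_ord1.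
Qed.

Section Algorithm.
Context {R : realType} {d m : nat} {v : 'I_m -> 'cV[R[i]]_d}.
Context {sigma : nat -> 'I_m} {alpha : R}.

Lemma A_alg_herm j : (A_alg v sigma j)^t* = A_alg v sigma j.
Proof. by rewrite raddf_sum map_mx_sum; apply: eq_bigr => k _; rewrite outer_herm. Qed.

Lemma chosenE j i : (i \in chosen sigma j) = (i \in map sigma (iota 0 j)).
Proof. by rewrite inE; apply/hasP/mapP => [[k k_in /eqP <-]|[k k_in ->]]; exists k. Qed.

Section Normalised.
Hypothesis v_norm : forall i, (hconj (v i) *m v i) 0 0 = cR alpha.

Lemma total_mass : \sum_i v i *m hconj (v i) = 1%:M -> m%:R * alpha = d%:R.
Proof.
move=> /(congr1 mxtrace); rewrite tr_sum_outer mxtrace1.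
under eq_bigr => i _ do rewrite v_norm.
rewrite sumr_const card_ord => mass.
by apply: complexI; rewrite rmorphM !rmorph_nat mulr_natl.
Qed.

Lemma tr_A_alg j : \tr (A_alg v sigma j) = cR (j%:R * alpha).
Proof.
rewrite tr_sum_outer; under eq_bigr => k _ do rewrite v_norm.
by rewrite sumr_const_nat subn0 /cR rmorphM rmorph_nat mulr_natl.
Qed.

End Normalised.

Section Run.
Hypothesis run : is_run alpha v sigma.

Lemma run_uniq j : (j <= m %/ 2)%N -> uniq (map sigma (iota 0 j)).
Proof.
elim: j => [|j IHj] le_j //.
rewrite -addn1 iotaD map_cat cat_uniq IHj ?(ltnW le_j) //= orbF andbT add0n.
by have [+ _] := run j le_j; rewrite finset.in_setC chosenE.
Qed.

Lemma card_chosen j : (j <= m %/ 2)%N -> #|chosen sigma j| = j.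
Proof.
move=> le_j; rewrite (eq_card (chosenE j)).
by move/card_uniqP: (run_uniq _ le_j); rewrite size_map size_iota.
Qed.

Lemma card_B_alg j : (j <= m %/ 2)%N -> #|B_alg sigma j| = (m - j)%N.
Proof.
move=> le_j; have := cardsC (chosen sigma j).
rewrite card_ord card_chosen // => mE.
apply/eqP; rewrite -(eqn_add2l j) subnKC ?(leq_trans le_j (leq_div m 2)) //.
by rewrite /B_alg mE.
Qed.

Lemma A_alg_chosen j : (j <= m %/ 2)%N ->
  A_alg v sigma j = \sum_(i in chosen sigma j) v i *m hconj (v i).
Proof.
move=> le_j; rewrite /A_alg /index_iota subn0.
rewrite -(big_map sigma xpredT (fun i => v i *m hconj (v i))).
by rewrite big_uniq ?run_uniq //; apply: eq_bigl => i; rewrite chosenE.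
Qed.

Lemma sum_B_alg j : (j <= m %/ 2)%N ->
  \sum_(i in B_alg sigma j) v i *m hconj (v i) =
  \sum_i v i *m hconj (v i) - A_alg v sigma j.
Proof.
move=> le_j; rewrite (bigID (mem (chosen sigma j)) predT) /= A_alg_chosen //.
by rewrite addrC addrK; apply: eq_bigl => i; rewrite finset.in_setC.
Qed.

End Run.

End Algorithm.

Theorem lemma3p5 (R : realType) (d m : nat) (alpha : R)
    (v : 'I_m -> 'cV[R[i]]_d) (sigma : nat -> 'I_m) (j : nat) :
  (0 < d)%N ->
  ~~ odd m ->
  \sum_(i < m) (v i *m hconj (v i)) = 1%:M ->
  (forall i, (hconj (v i) *m v i) 0 0 = cR alpha) ->
  alpha <= 1 / (221 * d%:R) ->
  is_run alpha v sigma ->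
  (j < m %/ 2)%N ->
  (forall j', (j' <= j)%N ->
     u_alg d alpha j' - lambda_max (A_alg v sigma j') >= 1 / 3 /\
     kappa ((cR (u_alg d alpha j'))%:M - A_alg v sigma j') <= 3 / 2) ->
  let A := A_alg v sigma j in
  let u := u_alg d alpha j in
  let uh := u_alg d alpha j.+1 in
  \sum_(i in B_alg sigma j) (Phi u A - Phi uh (A + v i *m hconj (v i)))
  >= (m - j)%:R * trlog (invmx ((cR u)%:M - A) *m ((cR uh)%:M - A))
     + 1 / alpha * ((m - j)%:R / m%:R)
       * trlog (1%:M - cR alpha *: invmx ((cR uh)%:M - A)).
Proof.
move=> d_gt0 _ sum_vv v_norm alpha_le run lt_j spec; cbv zeta.
have le_j : (j <= m %/ 2)%N := ltnW lt_j.
have lt_jm : (j < m)%N := leq_trans lt_j (leq_div m 2).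
have m_alpha : m%:R * alpha = d%:R := total_mass v_norm sum_vv.
have alpha_gt0 : 0 < alpha.
  have : 0 < m%:R * alpha :> R by rewrite m_alpha ltr0n.
  by rewrite pmulr_rgt0 // ltr0n (leq_ltn_trans _ lt_jm).
have alpha_lt : alpha < 1 / 3.
  apply: le_lt_trans alpha_le _; rewrite ltr_pdivrMr ?mulr_gt0 ?ltr0n //.
  have : 1 <= d%:R :> R by rewrite ler1n.
  lra.
have [gap _] := spec j (leqnn j).
apply: (sum_Phi_decrease_ge _ (A_alg_herm j) lt_jm alpha_gt0 m_alpha
          (card_B_alg run j le_j) (tr_A_alg v_norm j) v_norm).
- by rewrite (sum_B_alg run j le_j) sum_vv.
- lra.
- rewrite /u_alg lerD2l ler_wpM2r ?ler_nat //.
  by rewrite divr_ge0 ?ler0n // ltW.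
Qed.
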